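(* Let $\mathcal T\in\Sigma^n$ be a text and $\pi$ be an order-preserving permutation for $\mathcal T$. For any string $P\in\Sigma^+$ that occurs in $\mathcal T$ there exists exactly one primary occurrence $P=\mathcal T[i,i+|P|-1]$. Furthermore, this occurrence is the one minimizing $\pi(i)$ among all occurrences of $P$.
   Context: A text is a string $\mathcal T\in\Sigma^n$ over an integer alphabet whose last symbol $\mathcal T[n]=\$$ occurs only there and is smallest. For $i\ne j$, $\mathrm{rlce}(i,j)$ is the length of the longest common prefix of $\mathcal T[i,n]$ and $\mathcal T[j,n]$. A permutation $\pi:[n]\to[n]$ is order-preserving for $\mathcal T$ if for all $i,j\in[n-1]$, $\pi(i)<\pi(j)$ and $\mathcal T[i,i+1]=\mathcal T[j,j+1]$ imply $\pi(i+1)<\pi(j+1)$. $\mathrm{LPF}_\pi[i]=0$ if $\pi(i)=1$, else $\mathrm{LPF}_\pi[i]=\max_{\pi(j)<\pi(i)}\mathrm{rlce}(j,i)$. An occurrence $\mathcal T[i,i+|P|-1]=P$ is primary if $\mathrm{LPF}_\pi[i]<|P|$, and secondary otherwise. *)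

(* Positions are 0-based: position k (0 <= k < n) of the
   seq T corresponds to the paper's position k+1. *)
From mathcomp Require Import all_boot all_order all_fingroup.
Unset Strict Implicit. Unset Printing Implicit Defensive.

Definition is_text (T : seq nat) : Prop :=
  0 < size T /\
  forall k, k < (size T).-1 ->
    nth 0 T k != nth 0 T (size T).-1 /\ nth 0 T (size T).-1 <= nth 0 T k.

Fixpoint lcp (s t : seq nat) : nat :=
  match s, t with
  | x :: s', y :: t' => if x == y then (lcp s' t').+1 else 0
  | _, _ => 0
  end.

Definition rlce (T : seq nat) (i j : nat) : nat := lcp (drop i T) (drop j T).

Definition order_preserving (T : seq nat) (pi : {perm 'I_(size T)}) : Prop :=
  forall (i j i1 j1 : 'I_(size T)),
    val i1 = (val i).+1 -> val j1 = (val j).+1 ->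
    pi i < pi j ->
    nth 0 T i = nth 0 T j -> nth 0 T i1 = nth 0 T j1 ->
    pi i1 < pi j1.

Definition LPF (T : seq nat) (pi : {perm 'I_(size T)}) (i : 'I_(size T)) : nat :=
  if val (pi i) == 0 then 0
  else \max_(j : 'I_(size T) | pi j < pi i) rlce T j i.

Definition occurs_at (T P : seq nat) (i : nat) : Prop :=
  i + size P <= size T /\ take (size P) (drop i T) = P.

Definition primary (T : seq nat) (pi : {perm 'I_(size T)}) (P : seq nat)
  (i : 'I_(size T)) : Prop :=
  occurs_at T P i /\ LPF T pi i < size P.

(* An occurrence i of P is primary iff no occurrence j has pi(j) < pi(i):
   an earlier-ranked occurrence j would give rlce(j,i) >= |P|, and conversely
   any j with rlce(j,i) >= |P| is itself an occurrence of P. Hence the primary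
   occurrences are exactly the pi-minimal ones, and there is exactly one since
   pi is injective. *)
From mathcomp Require Import all_boot all_order all_fingroup.

Lemma leq_lcp (s t : seq nat) n :
  n <= size s -> n <= size t -> take n s = take n t -> n <= lcp s t.
Proof.
elim: s t n => [|x s IHs] [|y t] [|n] //= s_ge t_ge [-> eq_take].
by rewrite eqxx ltnS; apply: IHs.
Qed.

Lemma lcp_take (s t : seq nat) n :
  n <= lcp s t -> n <= size s /\ take n s = take n t.
Proof.
elim: s t n => [|x s IHs] [|y t] [|n] //=.
by case: eqP => // <-; rewrite ltnS => /IHs [le_n ->].
Qed.

Section Occurrences.

Set Implicit Arguments.

Variables T P : seq nat.

Definition occursb (i : nat) : bool :=
  (i + size P <= size T) && (take (size P) (drop i T) == P).

Lemma occursbP i : reflect (occurs_at T P i) (occursb i).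
Proof. by apply: (iffP andP) => [[? /eqP]|[? ->]]. Qed.

Lemma occurs_at_rlce i j :
  occurs_at T P i -> occurs_at T P j -> size P <= rlce T i j.
Proof.
move=> [le_i take_i] [le_j take_j].
by apply: leq_lcp; rewrite ?size_drop ?leq_subRL ?take_i ?take_j //
   (leq_trans (leq_addr _ _) le_i, leq_trans (leq_addr _ _) le_j).
Qed.

Lemma rlce_occurs_at i j :
  0 < size P -> occurs_at T P j -> size P <= rlce T i j -> occurs_at T P i.
Proof.
move=> P_gt0 [_ take_j] /lcp_take [le_size eq_take].
split; last by rewrite eq_take.
rewrite size_drop in le_size.
have lt_i : i < size T by rewrite -subn_gt0 (leq_trans P_gt0).
by rewrite -(subnKC (ltnW lt_i)) leq_add2l.
Qed.

Variable pi : {perm 'I_(size T)}.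

Lemma LPF_ltP (i : 'I_(size T)) k : 0 < k ->
  LPF T pi i < k <-> forall j : 'I_(size T), pi j < pi i -> rlce T j i < k.
Proof.
move=> k_gt0; rewrite /LPF; case: eqP => [pi_i0 | _].
  by split=> // _ j; rewrite pi_i0.
rewrite -(prednK k_gt0) ltnS.
by split=> [/bigmax_leqP le_max j /le_max | le_max]; last apply/bigmax_leqP.
Qed.

Lemma primary_minimal (i : 'I_(size T)) :
  0 < size P -> occurs_at T P i ->
  primary T pi P i <-> forall j : 'I_(size T), occurs_at T P j -> pi i <= pi j.
Proof.
move=> P_gt0 occ_i; split=> [[_ /(LPF_ltP _ _ P_gt0) LPF_lt] j occ_j | min_i].
  rewrite leqNgt; apply/negP => /LPF_lt.
  by rewrite ltnNge (occurs_at_rlce occ_j occ_i).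
split=> //; apply/(LPF_ltP _ _ P_gt0) => j lt_ji; rewrite ltnNge; apply/negP.
move=> /(rlce_occurs_at _ P_gt0 occ_i) /min_i.
by rewrite leqNgt lt_ji.
Qed.

End Occurrences.

Theorem lemma28 (T : seq nat) (pi : {perm 'I_(size T)}) (P : seq nat) :
  is_text T -> order_preserving T pi -> 0 < size P ->
  (exists i : 'I_(size T), occurs_at T P i) ->
  exists i : 'I_(size T),
    [/\ primary T pi P i,
        (forall j : 'I_(size T), primary T pi P j -> j = i) &
        (forall j : 'I_(size T), occurs_at T P j -> pi i <= pi j)].
Proof.
move=> _ _ P_gt0 [i0 /occursbP occ_i0].
have [i /occursbP occ_i min_i] :=
  @arg_minnP _ i0 (fun i : 'I_(size T) => occursb T P i) (fun i => pi i) occ_i0.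
have {}min_i (j : 'I_(size T)) : occurs_at T P j -> pi i <= pi j by move/occursbP/min_i.
exists i; split=> // [|j]; first exact/primary_minimal.
move=> prim_j; have [occ_j _] := prim_j.
have /(primary_minimal _ _ P_gt0 occ_j) min_j := prim_j.
apply: (@perm_inj _ pi); apply/ord_inj/eqP.
by rewrite eqn_leq min_j ?min_i.
Qed.
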